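(* Let $p$ be a prime and $k,n$ positive integers. Then: (1) $P(p^{k+1},n)$ equals either $P(p^k,n)$ or $pP(p^k,n)$. (2) If $k\ge2$ and $P(p^{k+1},n)=pP(p^k,n)$, then $P(p^{k+2},n)=pP(p^{k+1},n)$. (3) If $P(p^{N+1},n)=pP(p^N,n)$ for some integer $N\ge2$, then $P(p^{N+k},n)=p^kP(p^N,n)$ for all positive integers $k$.
   Context: For positive integers $m,n$, let $\mathbf{Z}_m$ be the integers modulo $m$ and $T:\mathbf{Z}_m^n\to\mathbf{Z}_m^n$, $T(a_0,\dots,a_{n-1})=(a_0+a_1,a_1+a_2,\dots,a_{n-1}+a_0)$. For $\mathbf{a}\in\mathbf{Z}_m^n$ the cycle length of $(T^k\mathbf{a})_{k\ge0}$ is the smallest positive integer $P$ such that there is $N$ with $T^{k+P}\mathbf{a}=T^k\mathbf{a}$ for all $k\ge N$. $P(m,n)$ denotes the maximum of these cycle lengths over all $\mathbf{a}\in\mathbf{Z}_m^n$. *)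

From HB Require Import structures.
From mathcomp Require Import all_boot all_algebra.
From Stdlib Require Import ClassicalEpsilon.
Set Implicit Arguments. Unset Strict Implicit. Unset Printing Implicit Defensive.
Import GRing.Theory.
Local Open Scope ring_scope.

(* Vectors in Z_m^n, indexed by 'I_n = {0,...,n-1}.  'Z_m is only the
   integers mod m for m >= 2 (always the case below: m = p^j, j >= 1). *)
Definition Zvec (m n : nat) := {ffun 'I_n -> 'Z_m}.

Definition Tmap (m n : nat) (a : Zvec m n) : Zvec m n :=
  [ffun i => a i + a (ordS i)].

Definition is_eventual_period (m n : nat) (a : Zvec m n) (P : nat) : Prop :=
  exists N : nat, forall k : nat, (N <= k)%N ->
    iter (k + P) (@Tmap m n) a = iter k (@Tmap m n) a.

Definition is_cycle_length (m n : nat) (a : Zvec m n) (L : nat) : Prop :=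
  (0 < L)%N /\ is_eventual_period a L /\
  forall P : nat, (0 < P)%N -> is_eventual_period a P -> (L <= P)%N.

(* the cycle length of a (the unique L with is_cycle_length a L; it exists
   since Z_m^n is finite) *)
Definition cycle_length (m n : nat) (a : Zvec m n) : nat :=
  epsilon (inhabits 0%N) (fun L => is_cycle_length a L).

Definition Pmax (m n : nat) : nat :=
  (\max_(a : Zvec m n) cycle_length a)%N.

(* Reducing integer column vectors modulo m turns T into multiplication by the
   integer matrix A = I + C, with C the cyclic shift.  The powers of A are
   circulant, so the orbit of e_0 already detects every congruence
   A^(N+Q) = A^N (mod m); hence P(m,n) is the least eventual period of the
   powers of A modulo m, call it L_j when m = p^j.
   Expanding A^((N+Q)p) = (A^N + (A^(N+Q) - A^N))^p by the binomial theorem, a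
   period Q modulo d with p | d gives the period Qp modulo dp, so
   L_j | L_(j+1) | p L_j, which is (1).  When p^2 | d (here: j >= 2) the same
   expansion equals p A^(N(p-1)) (A^(N+Q) - A^N) modulo dp^2; cancelling p, if
   Qp is a period modulo dp^2 then Q is one modulo dp.  Applied to Q = L_j this
   rules out L_(j+2) = L_(j+1) once L_(j+1) = p L_j, which is (2), and (3)
   follows by induction. *)

From HB Require Import structures.
From mathcomp Require Import all_boot all_algebra.
From Stdlib Require Import ClassicalEpsilon Classical Wf_nat.
Set Implicit Arguments. Unset Strict Implicit. Unset Printing Implicit Defensive.
Import GRing.Theory.
Local Open Scope ring_scope.

Lemma mxOver_dvdz_trans (d e : nat) m n (X : 'M[int]_(m, n)) :
  (d %| e)%N -> X \is a mxOver (dvdz e) -> X \is a mxOver (dvdz d).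
Proof. by move=> de; apply: mxOverS => x; apply: dvdz_trans. Qed.

Lemma mxOver_dvdz_mull (d : int) m n r (X : 'M[int]_(m, n)) (Y : 'M[int]_(n, r)) :
  Y \is a mxOver (dvdz d) -> X *m Y \is a mxOver (dvdz d).
Proof.
move=> /mxOverP dY; apply/mxOverP => i j.
by rewrite mxE rpred_sum // => l _; apply: dvdz_mull.
Qed.

Lemma mxOver_dvdz_mulr (d : int) m n r (X : 'M[int]_(m, n)) (Y : 'M[int]_(n, r)) :
  X \is a mxOver (dvdz d) -> X *m Y \is a mxOver (dvdz d).
Proof.
move=> /mxOverP dX; apply/mxOverP => i j.
by rewrite mxE rpred_sum // => l _; apply: dvdz_mulr.
Qed.

Lemma mxOver_dvdz_mul (d e : int) m n r (X : 'M[int]_(m, n)) (Y : 'M[int]_(n, r)) :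
  X \is a mxOver (dvdz d) -> Y \is a mxOver (dvdz e) -> X *m Y \is a mxOver (dvdz (d * e)).
Proof.
move=> /mxOverP dX /mxOverP eY; apply/mxOverP => i j.
by rewrite mxE rpred_sum // => l _; apply: dvdz_mul.
Qed.

Lemma mxOver_dvdz_exp (d : nat) n (X : 'M[int]_n) k :
  X \is a mxOver (dvdz d) -> X ^+ k \is a mxOver (dvdz (d ^ k)%N).
Proof.
move=> dX; elim: k => [|k IHk]; first by apply/mxOverP => i j; rewrite dvd1z.
by rewrite exprS expnS PoszM -mulmxE mxOver_dvdz_mul.
Qed.

Lemma mxOver_dvdz_muln (d c : nat) m n (X : 'M[int]_(m, n)) :
  X \is a mxOver (dvdz d) -> X *+ c \is a mxOver (dvdz (d * c)%N).
Proof.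
move=> /mxOverP dX; apply/mxOverP => i j.
by rewrite mulmxnE -mulr_natr natz PoszM dvdz_mul.
Qed.

Lemma mxOver_dvdz_mulnK (d c : nat) m n (X : 'M[int]_(m, n)) : (0 < c)%N ->
  X *+ c \is a mxOver (dvdz (d * c)%N) -> X \is a mxOver (dvdz d).
Proof.
move=> c_gt0 /mxOverP dX; apply/mxOverP => i j.
by have := dX i j; rewrite mulmxnE -mulr_natr natz PoszM dvdz_mul2r // eqz_nat -lt0n.
Qed.

Section BinomialDivisibility.
Variable p : nat.
Hypothesis p_pr : prime p.

Lemma predn_prime_gt0 : (0 < p.-1)%N.
Proof. by rewrite -subn1 subn_gt0 prime_gt1. Qed.

Lemma dvdn_expn_bin d i : (p %| d)%N -> (0 < i <= p)%N -> (d * p %| d ^ i * 'C(p, i))%N.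
Proof.
move=> pd /andP[i_gt0 ip]; rewrite -{1}(prednK i_gt0) expnS -mulnA dvdn_mul //.
have [i_ltp | i_gep] := ltnP i p; first by rewrite dvdn_mull // prime_dvd_bin // i_gt0.
have -> : i = p by apply/eqP; rewrite eqn_leq ip.
by rewrite binn muln1 dvdn_exp // predn_prime_gt0.
Qed.

Lemma dvdn_expn_bin2 d i : (p ^ 2 %| d)%N -> (1 < i <= p)%N ->
  (d * p ^ 2 %| d ^ i * 'C(p, i))%N.
Proof.
move=> p2d /andP[i_gt1 ip]; have i_gt0 := ltnW i_gt1.
have pd : (p %| d)%N by apply: dvdn_trans p2d; rewrite dvdn_exp.
rewrite -{1}(prednK i_gt0) (expnS d) -mulnA dvdn_mul //.
have [i_ltp | i_gep] := ltnP i p.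
  by rewrite -mulnn dvdn_mul ?prime_dvd_bin ?i_gt0 // dvdn_exp // -ltnS prednK.
have -> : i = p by apply/eqP; rewrite eqn_leq ip.
by rewrite binn muln1 (dvdn_trans p2d) // dvdn_exp // predn_prime_gt0.
Qed.

End BinomialDivisibility.

Lemma exprDn_sub_comm (R : pzRingType) (x y : R) n : GRing.comm x y ->
  (x + y) ^+ n - x ^+ n = \sum_(1 <= i < n.+1) (x ^+ (n - i) * y ^+ i) *+ 'C(n, i).
Proof.
move=> cxy; rewrite exprDn_comm // big_ord_recl subn0 mulr1 bin0 mulr1n.
by rewrite addrAC subrr add0r big_add1 big_mkord.
Qed.

Section BinomialLift.
Variables (p n : nat) (x y : 'M[int]_n).
Hypotheses (p_pr : prime p) (cxy : GRing.comm x y).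

Lemma binomial_term_dvdz (d : nat) i : y \is a mxOver (dvdz d) ->
  (x ^+ (p - i) * y ^+ i) *+ 'C(p, i) \is a mxOver (dvdz (d ^ i * 'C(p, i))%N).
Proof.
by move=> dy; rewrite mxOver_dvdz_muln // -mulmxE mxOver_dvdz_mull // mxOver_dvdz_exp.
Qed.

Lemma exprD_dvdz_lift (d : nat) : (p %| d)%N -> y \is a mxOver (dvdz d) ->
  (x + y) ^+ p - x ^+ p \is a mxOver (dvdz (d * p)%N).
Proof.
move=> pd dy; rewrite exprDn_sub_comm // big_nat_cond.
apply: rpred_sum => i /andP[/andP[i_gt0 ip] _].
apply: (mxOver_dvdz_trans _ (binomial_term_dvdz _ dy)).
by apply: dvdn_expn_bin; rewrite ?i_gt0.
Qed.

Lemma exprD_dvdz_lift2 (d : nat) : (p ^ 2 %| d)%N -> y \is a mxOver (dvdz d) ->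
  (x + y) ^+ p - x ^+ p - (x ^+ p.-1 * y) *+ p \is a mxOver (dvdz (d * p ^ 2)%N).
Proof.
move=> p2d dy; rewrite exprDn_sub_comm // big_ltn ?ltnS ?prime_gt0 //.
rewrite subn1 expr1 bin1 addrC addKr big_nat_cond.
apply: rpred_sum => i /andP[/andP[i_gt1 ip] _].
apply: (mxOver_dvdz_trans _ (binomial_term_dvdz _ dy)).
by apply: dvdn_expn_bin2; rewrite ?i_gt1.
Qed.

End BinomialLift.

Definition mx_period (d : nat) n (M : 'M[int]_n) (Q : nat) : Prop :=
  exists N, M ^+ (N + Q) - M ^+ N \is a mxOver (dvdz d).

Definition least_mx_period (d : nat) n (M : 'M[int]_n) (L : nat) : Prop :=
  [/\ (0 < L)%N, mx_period d M L & forall Q, (0 < Q)%N -> mx_period d M Q -> (L <= Q)%N].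

Section MatrixPeriods.
Variables (n : nat) (M : 'M[int]_n).

Lemma commr_exprs i j : GRing.comm (M ^+ i) (M ^+ j).
Proof. by rewrite /GRing.comm -!exprD addnC. Qed.

Lemma expr_diff_shift K N Q :
  M ^+ (K + N + Q) - M ^+ (K + N) = M ^+ K * (M ^+ (N + Q) - M ^+ N).
Proof. by rewrite mulrBr -!exprD addnA. Qed.

Lemma mx_period_dvdn d e Q : (d %| e)%N -> mx_period e M Q -> mx_period d M Q.
Proof. by move=> de [N eMN]; exists N; apply: mxOver_dvdz_trans eMN. Qed.

Lemma mx_period_sub d Q1 Q2 : (Q1 <= Q2)%N ->
  mx_period d M Q1 -> mx_period d M Q2 -> mx_period d M (Q2 - Q1).
Proof.
move=> leQ12 [N1 dMN1] [N2 dMN2]; exists (N1 + N2 + Q1)%N.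
rewrite -addnA subnKC //.
have -> : M ^+ (N1 + N2 + Q2) - M ^+ (N1 + N2 + Q1) =
    (M ^+ (N1 + N2 + Q2) - M ^+ (N1 + N2)) - (M ^+ (N2 + N1 + Q1) - M ^+ (N2 + N1)).
  by rewrite [(N2 + N1)%N]addnC opprB addrA subrK.
by apply: rpredB; rewrite expr_diff_shift -mulmxE mxOver_dvdz_mull.
Qed.

Lemma least_mx_period_dvdn d L Q : least_mx_period d M L -> mx_period d M Q -> (L %| Q)%N.
Proof.
case=> L_gt0 perL minL; elim/ltn_ind: Q => Q IHQ perQ.
have [-> | Q_gt0] := posnP Q; first exact: dvdn0.
have leLQ := minL Q Q_gt0 perQ.
rewrite -(subnK leLQ) dvdn_addl //; apply: IHQ; last exact: mx_period_sub.
by rewrite ltn_subrL L_gt0.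
Qed.

Lemma mx_period_mulp p d Q : prime p -> (p %| d)%N ->
  mx_period d M Q -> mx_period (d * p) M (Q * p).
Proof.
move=> p_pr pd [N dMN]; exists (N * p)%N.
have := exprD_dvdz_lift p_pr (commrB (commr_exprs _ _) (commr_refl _)) pd dMN.
by rewrite [M ^+ N + _]addrC subrK -!exprM mulnDl.
Qed.

(* Modulo d p^2 the binomial expansion reduces to p x^(p-1) y; cancelling p
   gives the congruence modulo d p. *)
Lemma mx_period_mulp2 p d Q : prime p -> (p ^ 2 %| d)%N ->
  mx_period d M Q -> mx_period (d * p ^ 2) M (Q * p) -> mx_period (d * p) M Q.
Proof.
move=> p_pr p2d [N dMN] [K dMK].
set x := M ^+ N; set y := M ^+ (N + Q) - M ^+ N.
have cxy : GRing.comm x y := commrB (commr_exprs _ _) (commr_refl _).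
have dxy : M ^+ K * ((x + y) ^+ p - x ^+ p) \is a mxOver (dvdz (d * p ^ 2)%N).
  rewrite [x + _]addrC subrK -!exprM mulnDl.
  rewrite -expr_diff_shift [(K + _)%N]addnC expr_diff_shift.
  by rewrite -mulmxE mxOver_dvdz_mull.
have dlin := exprD_dvdz_lift2 p_pr cxy p2d dMN.
have : M ^+ K * ((x ^+ p.-1 * y) *+ p) \is a mxOver (dvdz (d * p ^ 2)%N).
  have -> : M ^+ K * ((x ^+ p.-1 * y) *+ p) = M ^+ K * ((x + y) ^+ p - x ^+ p)
      - M ^+ K * ((x + y) ^+ p - x ^+ p - (x ^+ p.-1 * y) *+ p).
    by rewrite -mulrBr opprB addrC subrK.
  by rewrite rpredB // -mulmxE mxOver_dvdz_mull.
rewrite mulrnAr -[(p ^ 2)%N]mulnn mulnA => /(mxOver_dvdz_mulnK (prime_gt0 p_pr)) dKxy.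
exists (K + N * p.-1 + N)%N.
by rewrite expr_diff_shift (exprD _ K) exprM -mulrA.
Qed.

End MatrixPeriods.

Section Circulant.
Variables (R : pzRingType) (n : nat).

Definition circulant_pred (E : 'M[R]_n.+1) :=
  [forall i, forall j, forall k, E (i + k) (j + k) == E i j].
Arguments circulant_pred _ /.
Definition circulant := [qualify a E : 'M[R]_n.+1 | circulant_pred E].

Lemma circulantP (E : 'M[R]_n.+1) :
  reflect (forall i j k, E (i + k) (j + k) = E i j) (E \is a circulant).
Proof.
apply: (iffP forallP) => [cE i j k | cE i].
  by have /forallP/(_ k)/eqP := forallP (cE i) j.
by apply/forallP => j; apply/forallP => k; rewrite cE.
Qed.

Fact circulant_subring_closed : subring_closed circulant.
Proof.
split=> [|E F /circulantP cE /circulantP cF|E F /circulantP cE /circulantP cF];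
  apply/circulantP => i j k.
- by rewrite !mxE (inj_eq (@addIr _ k)).
- by rewrite !mxE cE cF.
rewrite !mxE (reindex_inj (@addIr _ k)) /=.
by apply: eq_bigr => l _; rewrite cE cF.
Qed.

HB.instance Definition _ :=
  GRing.isSubringClosed.Build _ circulant_pred circulant_subring_closed.

Lemma circulant_col0 (E : 'M[R]_n.+1) i j :
  E \is a circulant -> E i j = col 0 E (i - j) 0.
Proof. by move=> /circulantP cE; rewrite mxE -[RHS](cE _ _ j) subrK add0r. Qed.

End Circulant.
Arguments circulant {R n}.

Lemma iter_eventually_periodic (T : finType) (f : T -> T) (x : T) :
  exists2 Q, (0 < Q)%N & exists N, forall k, (N <= k)%N -> iter (k + Q) f x = iter k f x.
Proof.
have /injectivePn[i [j neq_ij eq_fij]] : ~~ injectiveb (fun i : 'I_#|T|.+1 => iter i f x).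
  by apply/injectiveP => /leq_card; rewrite card_ord ltnn.
wlog lt_ij : i j neq_ij eq_fij / (i < j)%N.
  move=> wlog_ij; have [/wlog_ij|/wlog_ij|/val_inj eq_ij] := ltngtP i j; [exact | |].
    by apply; rewrite // eq_sym.
  by rewrite eq_ij eqxx in neq_ij.
exists (j - i)%N; first by rewrite subn_gt0.
exists (val i) => k le_ik; rewrite -(subnK le_ik) -addnA subnKC 1?ltnW //.
by rewrite !iterD eq_fij.
Qed.

Lemma classical_ex_minn (P : nat -> Prop) :
  (exists n, P n) -> exists n, P n /\ forall k, P k -> (n <= k)%N.
Proof.
move=> exP; have [n [[Pn minP] _]] :=
  dec_inh_nat_subset_has_unique_least_element P (fun n => classic (P n)) exP.
by exists n; split=> // k /minP /leP.
Qed.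

Lemma cycle_length_spec m n (a : Zvec m n) : is_cycle_length a (cycle_length a).
Proof.
apply: epsilon_spec.
have [Q Q_gt0 perQ] := iter_eventually_periodic (@Tmap m n) a.
have [L [[L_gt0 perL] minL]] := @classical_ex_minn
  (fun Q => (0 < Q)%N /\ is_eventual_period a Q) (ex_intro _ Q (conj Q_gt0 perQ)).
by exists L; split=> //; split=> // P P_gt0 perP; apply: minL.
Qed.

Definition Tmx n : 'M[int]_n := \matrix_(i, j) ((j == i)%:R + (j == ordS i)%:R).

Lemma ordS_addr n (i k : 'I_n.+1) : ordS (i + k) = ordS i + k.
Proof.
by apply/val_inj; rewrite /= modnDml -[((i + k) %% n.+1).+1]addn1 modnDml addn1 addSn.
Qed.

Lemma Tmx_circulant n : Tmx n.+1 \is a circulant.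
Proof. by apply/circulantP => i j k; rewrite !mxE ordS_addr !(inj_eq (@addIr _ k)). Qed.

Lemma sum_delta_mul n (c : 'I_n) (F : 'I_n -> int) : \sum_j (j == c)%:R * F j = F c.
Proof. by rewrite (bigD1 c) //= eqxx mul1r big1 ?addr0 // => j /negbTE ->; rewrite mul0r. Qed.

Lemma Zp_intr_eq0 m (z : int) : (1 < m)%N -> ((z%:~R : 'Z_m) == 0) = (m %| z)%Z.
Proof.
move=> m_gt1; case: z => k; rewrite ?NegzE ?mulrNz ?oppr_eq0 -pmulrn -val_eqE /=;
  by rewrite (val_Zp_nat m_gt1) /dvdz /= /dvdn unfold_in.
Qed.

Section Reduction.
Variables m n : nat.

Definition zvec (v : 'cV[int]_n) : Zvec m n := [ffun i => (v i 0)%:~R].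

Lemma Tmap_zvec v : Tmap (zvec v) = zvec (Tmx n *m v).
Proof.
apply/ffunP => i; rewrite !ffunE !mxE.
under eq_bigr do rewrite mxE mulrDl.
by rewrite big_split /= !sum_delta_mul intrD.
Qed.

Lemma iter_Tmap_zvec k v : iter k (@Tmap m n) (zvec v) = zvec (Tmx n ^+ k *m v).
Proof.
elim: k => [|k IHk]; first by rewrite expr0 mul1mx.
by rewrite iterS IHk Tmap_zvec mulmxA exprS mulmxE.
Qed.

Lemma zvec_surj (a : Zvec m n) : exists v, zvec v = a.
Proof.
exists (\col_i (Posz (a i : nat))); apply/ffunP => i.
by rewrite !ffunE mxE -pmulrn natr_Zp.
Qed.

Hypothesis m_gt1 : (1 < m)%N.

Lemma zvec_eq v w : zvec v = zvec w <-> v - w \is a mxOver (dvdz m).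
Proof.
split=> [eq_vw | /mxOverP dvw].
  apply/mxOverP => i j; rewrite (ord1 j) !mxE -(Zp_intr_eq0 _ m_gt1) intrB.
  by have /ffunP/(_ i) := eq_vw; rewrite !ffunE => ->; rewrite subrr.
apply/ffunP => i; rewrite !ffunE; apply/eqP; rewrite -subr_eq0 -intrB.
by have := dvw i 0; rewrite !mxE -(Zp_intr_eq0 _ m_gt1).
Qed.

Lemma mx_period_eventual_period Q (a : Zvec m n) :
  mx_period m (Tmx n) Q -> is_eventual_period a Q.
Proof.
move=> [N dTN]; have [v <-] := zvec_surj a.
exists N => k le_Nk; rewrite !iter_Tmap_zvec; apply/zvec_eq.
rewrite -mulmxBl mxOver_dvdz_mulr // -(subnK le_Nk) expr_diff_shift.
by rewrite -mulmxE mxOver_dvdz_mull.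
Qed.

End Reduction.

Section CirculantReduction.
Variables m n : nat.
Hypothesis m_gt1 : (1 < m)%N.
Local Notation delta := (zvec m (delta_mx 0 0 : 'cV[int]_n.+1)).

(* The powers of Tmx are circulant, hence determined by their column 0. *)
Lemma eventual_period_delta Q : is_eventual_period delta Q -> mx_period m (Tmx n.+1) Q.
Proof.
move=> [N perN]; exists N.
have := perN N (leqnn N); rewrite !iter_Tmap_zvec => /(zvec_eq m_gt1).
rewrite -mulmxBl -colE => /mxOverP dcol; apply/mxOverP => i j.
by rewrite circulant_col0 ?dcol // rpredB ?rpredX ?Tmx_circulant.
Qed.

(* Every orbit inherits the periods of Tmx, so the orbit of e_0 has the largest
   cycle length. *)
Lemma Pmax_least_period : least_mx_period m (Tmx n.+1) (Pmax m n.+1).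
Proof.
have [L_gt0 [perL minL]] := cycle_length_spec delta.
have perTL := eventual_period_delta perL.
have -> : Pmax m n.+1 = cycle_length delta.
  apply/eqP; rewrite eqn_leq leq_bigmax andbT; apply/bigmax_leqP => a _.
  have [_ [_ min_a]] := cycle_length_spec a.
  by apply: min_a => //; apply: mx_period_eventual_period.
split=> // Q Q_gt0 perQ; apply: minL => //.
exact: mx_period_eventual_period.
Qed.

End CirculantReduction.

Section PrimePowerPeriods.
Variables (p n : nat) (M : 'M[int]_n) (L : nat -> nat).
Hypothesis p_pr : prime p.
Hypothesis L_least : forall j, (0 < j)%N -> least_mx_period (p ^ j) M (L j).

Lemma least_period_succ j : (0 < j)%N -> L j.+1 = L j \/ L j.+1 = (p * L j)%N.
Proof.
move=> j_gt0; have [Lj_gt0 perLj _] := L_least j_gt0.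
have leastLSj := L_least (ltn0Sn j); have [_ perLSj _] := leastLSj.
have /dvdnP[c def_LSj] : (L j %| L j.+1)%N.
  apply: least_mx_period_dvdn (L_least j_gt0) _.
  by apply: mx_period_dvdn perLSj; rewrite dvdn_exp2l.
have : (L j.+1 %| L j * p)%N.
  apply: least_mx_period_dvdn leastLSj _; rewrite expnSr.
  by apply: mx_period_mulp perLj; rewrite // dvdn_exp.
have /primeP[_ /(_ c) c_dvd_p] := p_pr.
rewrite def_LSj [(L j * p)%N]mulnC dvdn_pmul2r // => /c_dvd_p/pred2P[] ->.
  by left; rewrite mul1n.
by right.
Qed.

Lemma least_period_succ_mulp j : (2 <= j)%N -> L j.+1 = (p * L j)%N ->
  L j.+2 = (p * L j.+1)%N.
Proof.
move=> j_ge2 def_LSj; have j_gt0 : (0 < j)%N by apply: leq_trans j_ge2.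
have [Lj_gt0 perLj _] := L_least j_gt0.
have [_ _ minLSj] := L_least (ltn0Sn j).
have [_ perLSSj _] := L_least (ltn0Sn j.+1).
have not_perSj : ~ mx_period (p ^ j.+1) M (L j).
  by move=> /(minLSj _ Lj_gt0); rewrite def_LSj leqNgt ltn_Pmull ?prime_gt1.
case: (least_period_succ (ltn0Sn j)) => // def_LSSj; case: not_perSj.
rewrite expnSr; apply: (mx_period_mulp2 p_pr) perLj _; first by rewrite dvdn_exp2l.
by rewrite -expnD addn2 mulnC -def_LSj -def_LSSj.
Qed.

Lemma least_period_mulpX N : (2 <= N)%N -> L N.+1 = (p * L N)%N ->
  forall j, L (N + j) = (p ^ j * L N)%N.
Proof.
move=> N_ge2 def_LSN.
have step i : L (N + i).+1 = (p * L (N + i))%N.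
  elim: i => [|i IHi]; first by rewrite addn0.
  by rewrite addnS least_period_succ_mulp // (leq_trans N_ge2) ?leq_addr.
elim=> [|j IHj]; first by rewrite addn0 mul1n.
by rewrite addnS step IHj expnS mulnA.
Qed.

End PrimePowerPeriods.

Theorem theorem5p1 (p k n : nat) (hp : prime p) (hk : (0 < k)%N) (hn : (0 < n)%N) :
  [/\ Pmax (p ^ k.+1) n = Pmax (p ^ k) n \/ Pmax (p ^ k.+1) n = (p * Pmax (p ^ k) n)%N,
      (2 <= k)%N -> Pmax (p ^ k.+1) n = (p * Pmax (p ^ k) n)%N ->
        Pmax (p ^ k.+2) n = (p * Pmax (p ^ k.+1) n)%N
    & forall N : nat, (2 <= N)%N ->
        Pmax (p ^ N.+1) n = (p * Pmax (p ^ N) n)%N ->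
        forall j : nat, (0 < j)%N -> Pmax (p ^ (N + j)) n = (p ^ j * Pmax (p ^ N) n)%N].
Proof.
case: n hn => [//|n] _.
have L_least j : (0 < j)%N -> least_mx_period (p ^ j) (Tmx n.+1) (Pmax (p ^ j) n.+1).
  by move=> j_gt0; apply: Pmax_least_period; rewrite -(exp1n j) ltn_exp2r // prime_gt1.
split.
- exact: least_period_succ hp L_least k hk.
- exact: least_period_succ_mulp hp L_least k.
- move=> N N_ge2 def_LSN j _; exact: least_period_mulpX hp L_least N N_ge2 def_LSN j.
Qed.
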